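(* Let $S=\langle T,\Pi,C\rangle$ be a state space and let $(A_i,\psi_i)$, $1\le i\le k$, be abstractions of $S$ forming an additive abstraction system. Then $h_{add}(t,g)\le OPT(t,g)$ for all $t,g\in T$.
   Context: A state space is a weighted directed graph $S=\langle T,\Pi,C\rangle$ where $T$ is a finite set of states, $\Pi\subseteq T\times T$ is a set of directed edges, and $C:\Pi\to\mathbb{N}=\{0,1,2,\dots\}$. A path from $u$ to $v$ is a sequence of edges $\langle\pi^1,\dots,\pi^n\rangle$ with $\pi^j=(u^{j-1},u^j)\in\Pi$, $u^0=u$, $u^n=v$; its cost is $C(\pi)=\sum_j C(\pi^j)$. $OPT(u,v)$ is the minimum cost of a path from $u$ to $v$ in $S$ (minima over empty sets are $+\infty$). An abstract state space is $A_i=\langle T_i,\Pi_i,C_i,R_i\rangle$ with $T_i$ a set of abstract states, $\Pi_i\subseteq T_i\times T_i$, and edge weights $C_i,R_i:\Pi_i\to\mathbb{N}$ (primary and residual cost), extended additively to paths. An abstraction of $S$ is a pair $(A_i,\psi_i)$ with $\psi_i:T\to T_i$ such that (1) for every $(u,v)\in\Pi$, $(\psi_i(u),\psi_i(v))\in\Pi_i$, and (2) for every $\pi=(u,v)\in\Pi$, $C_i(\pi_i)+R_i(\pi_i)\le C(\pi)$ where $\pi_i=(\psi_i(u),\psi_i(v))$. The system is additive if for every $\pi\in\Pi$, $\sum_{i=1}^k C_i(\pi_i)\le C(\pi)$. Define $C^*_i(x,y)=\min\{C_i(\rho):\rho\text{ a path from }x\text{ to }y\text{ in }A_i\}$ and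 $h_{add}(t,g)=\sum_{i=1}^k C^*_i(\psi_i(t),\psi_i(g))$. *)

From mathcomp Require Import all_boot.
From mathcomp Require Import boolp.
Set Implicit Arguments. Unset Strict Implicit. Unset Printing Implicit Defensive.

(* Extended naturals N ∪ {+oo}: [None] represents +oo. *)
Definition enat := option nat.

Definition ele (x y : enat) : Prop :=
  match y with
  | None => True
  | Some b => match x with Some a => (a <= b)%N | None => False end
  end.

Definition eadd (x y : enat) : enat :=
  match x, y with Some a, Some b => Some (a + b)%N | _, _ => None end.

Section Graphs.
Variables (V : Type) (E : rel V) (W : V -> V -> nat).

(* A path from u to v is given by its list of successive vertices p after u
   (u :: p = u^0, u^1, ..., u^n), every consecutive pair being an edge.
   The empty list is the empty path (n = 0) from u to u. *)
Definition is_path (u v : V) (p : seq V) : Prop := path E u p /\ last u p = v.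

Definition path_cost (u : V) (p : seq V) : nat := sumn (pairmap W u p).

Definition path_cost_pred (u v : V) : pred nat :=
  fun c => `[< exists p, is_path u v p /\ path_cost u p = c >].

Definition min_path_cost (u v : V) : enat :=
  match pselect (exists c, path_cost_pred u v c) with
  | left H => Some (ex_minn H)
  | right _ => None
  end.
End Graphs.

(* State space S = <T, Pi, C>; C is given on all pairs, only its values on
   edges of Pi matter. *)
Definition OPT (T : Type) (Pi : rel T) (C : T -> T -> nat) (u v : T) : enat :=
  min_path_cost Pi C u v.

Definition is_abstraction (T : Type) (Pi : rel T) (C : T -> T -> nat)
  (Ti : Type) (Pii : rel Ti) (Ci Ri : Ti -> Ti -> nat) (psi : T -> Ti) : Prop :=
  (forall u v, Pi u v -> Pii (psi u) (psi v)) /\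
  (forall u v, Pi u v -> (Ci (psi u) (psi v) + Ri (psi u) (psi v) <= C u v)%N).

Definition is_additive (T : Type) (Pi : rel T) (C : T -> T -> nat) (k : nat)
  (Ti : 'I_k -> Type) (Ci : forall i, Ti i -> Ti i -> nat)
  (psi : forall i, T -> Ti i) : Prop :=
  forall u v, Pi u v -> (\sum_(i < k) Ci i (psi i u) (psi i v) <= C u v)%N.

Definition Cstar (Ti : Type) (Pii : rel Ti) (Ci : Ti -> Ti -> nat) (x y : Ti) : enat :=
  min_path_cost Pii Ci x y.

Definition h_add (T : Type) (k : nat) (Ti : 'I_k -> Type)
  (Pii : forall i, rel (Ti i)) (Ci : forall i, Ti i -> Ti i -> nat)
  (psi : forall i, T -> Ti i) (t g : T) : enat :=
  \big[eadd/Some 0%N]_(i < k) Cstar (Pii i) (Ci i) (psi i t) (psi i g).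

(* A path of cost c from t to g in S maps, under each psi_i, to a path in A_i;
   its primary cost there bounds C*_i(psi_i t, psi_i g), and by additivity
   these abstract costs sum, edge by edge, to at most c.  Taking for c the
   optimal cost gives h_add(t, g) <= OPT(t, g). *)
From mathcomp Require Import all_boot.
From mathcomp Require Import boolp.

Set Implicit Arguments. Unset Strict Implicit. Unset Printing Implicit Defensive.

Lemma ele_big_eadd (I : finType) (F : I -> enat) (G : I -> nat) :
  (forall i, ele (F i) (Some (G i))) ->
  ele (\big[eadd/Some 0]_(i : I) F i) (Some (\sum_(i : I) G i)).
Proof.
move=> leFG; apply: (big_rec2 (fun x y => ele x (Some y))) => //= i x y _.
by case: (F i) (leFG i) => //= a; case: x => //= b; apply: leq_add.
Qed.

Lemma ele_Some_trans (x : enat) (a b : nat) :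
  ele x (Some a) -> (a <= b)%N -> ele x (Some b).
Proof. by case: x => //= n; apply: leq_trans. Qed.

Section MinPathCost.
Variables (V : Type) (E : rel V) (W : V -> V -> nat).

Lemma min_path_cost_le (u v : V) (p : seq V) :
  is_path E u v p -> ele (min_path_cost E W u v) (Some (path_cost W u p)).
Proof.
move=> uvp; rewrite /min_path_cost; case: pselect => [ex|noex] /=.
  by case: ex_minnP => m _; apply; apply/asboolP; exists p.
by case: noex; exists (path_cost W u p); apply/asboolP; exists p.
Qed.

Lemma min_path_costP (u v : V) (c : nat) :
  min_path_cost E W u v = Some c ->
  exists p, is_path E u v p /\ path_cost W u p = c.
Proof.
rewrite /min_path_cost; case: pselect => // ex [<-].
by case: ex_minnP => m /asboolP.
Qed.

End MinPathCost.

Lemma is_path_map (V V' : Type) (E : rel V) (E' : rel V') (f : V -> V')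
    (u v : V) (p : seq V) :
  (forall x y, E x y -> E' (f x) (f y)) ->
  is_path E u v p -> is_path E' (f u) (f v) (map f p).
Proof.
move=> homE [uvp <-]; split; last by rewrite last_map.
by elim: p u uvp => //= x p IHp u /andP[/homE -> /IHp].
Qed.

Lemma sum_path_cost_map (V : Type) (E : rel V) (W : V -> V -> nat)
    (I : finType) (Vi : I -> Type) (Wi : forall i, Vi i -> Vi i -> nat)
    (f : forall i, V -> Vi i) (u : V) (p : seq V) :
  (forall x y, E x y -> (\sum_(i : I) Wi i (f i x) (f i y) <= W x y)%N) ->
  path E u p ->
  (\sum_(i : I) path_cost (Wi i) (f i u) (map (f i) p) <= path_cost W u p)%N.
Proof.
move=> sumW_le; rewrite /path_cost.
elim: p u => [|x p IHp] u /=; first by rewrite big1.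
by case/andP=> /sumW_le uxW /IHp px; rewrite big_split leq_add.
Qed.

Theorem lemma4 (T : finType) (Pi : rel T) (C : T -> T -> nat) (k : nat)
  (Ti : 'I_k -> Type) (Pii : forall i, rel (Ti i))
  (Ci Ri : forall i, Ti i -> Ti i -> nat) (psi : forall i, T -> Ti i)
  (habs : forall i, is_abstraction Pi C (Pii i) (Ci i) (Ri i) (psi i))
  (hadd : is_additive Pi C Ci psi) :
  forall t g : T, ele (h_add Pii Ci psi t g) (OPT Pi C t g).
Proof.
move=> t g; rewrite /OPT.
case opt_tg: (min_path_cost Pi C t g) => [c|] //.
have [p [tgp <-]] := min_path_costP opt_tg.
apply: ele_Some_trans (sum_path_cost_map hadd tgp.1).
apply: ele_big_eadd => i; apply: min_path_cost_le.
exact: is_path_map (habs i).1 tgp.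
Qed.
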